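(* Let $c,\ell,N\in\mathbb{N}_+$ and let the maximum pooling layer map $w^{i-1}=(w^{i-1}_1,\dots,w^{i-1}_{\ell N})$, $w^{i-1}_m\in\mathbb{R}^c$, to $w^i=(w^i_1,\dots,w^i_N)$ with $w^i_k=\max_{j=1,\dots,\ell}w^{i-1}_{\ell(k-1)+j}$, the maximum taken entrywise (channel-wise). Let $\Sigma\in\mathbb{R}^{c\times c}$ be diagonal and positive definite. Then for all inputs $w^{i-1}_a,w^{i-1}_b$ and every $k=1,\dots,N$, $$-(w^i_{a,k}-w^i_{b,k})^\top\Sigma(w^i_{a,k}-w^i_{b,k})+\sum_{j=1}^{\ell}\big(w^{i-1}_{a,\ell(k-1)+j}-w^{i-1}_{b,\ell(k-1)+j}\big)^\top\Sigma\big(w^{i-1}_{a,\ell(k-1)+j}-w^{i-1}_{b,\ell(k-1)+j}\big)\ge 0.$$ Consequently, with $\underline{w}$ denoting the column-wise stacked vector, the layer satisfies $$\begin{bmatrix}\underline{w}_a^i-\underline{w}_b^i\\ \underline{w}_a^{i-1}-\underline{w}_b^{i-1}\end{bmatrix}^\top\begin{bmatrix}Q & 0\\ 0 & R\end{bmatrix}\begin{bmatrix}\underline{w}_a^i-\underline{w}_b^i\\ \underline{w}_a^{i-1}-\underline{w}_b^{i-1}\end{bmatrix}\ge0$$ for all inputs, with $Q=-\mathrm{blkdiag}(\Sigma,\dots,\Sigma)$ ($N$ blocks) and $R=\mathrm{blkdiag}(\Sigma,\dots,\Sigma)$ ($\ell N$ blocks).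
   Context: For a sequence $w=(w_1,\dots,w_M)$ of vectors in $\mathbb{R}^c$, the column-wise stacked vector is $\underline{w}=(w_1^\top,\dots,w_M^\top)^\top$. *)

From mathcomp Require Import all_boot all_order all_algebra.
Set Implicit Arguments. Unset Strict Implicit. Unset Printing Implicit Defensive.
Import Order.TTheory GRing.Theory Num.Theory.
Local Open Scope ring_scope.

(* A sequence (w_1,...,w_M) of vectors in R^c is represented as a matrix
   W : 'M[R]_(c, M) whose m-th column (0-based) is w_{m+1}. *)

Section Defs.
Variable R : realFieldType.

(* 0-based index of the j-th element (j < l) of the k-th pooling window (k < N):
   l*k + j, i.e. the paper's l(k-1)+j in 1-based indexing. *)
Lemma pool_idx_proof (l N : nat) (k : 'I_N) (j : 'I_l) : (l * k + j < l * N)%N.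
Proof.
case: k j => k hk [j hj] /=.
have : (l * k + j < l * k.+1)%N by rewrite mulnS addnC ltn_add2r.
move=> h; apply: (leq_trans h); by rewrite leq_mul2l hk orbT.
Qed.

Definition pool_idx (l N : nat) (k : 'I_N) (j : 'I_l) : 'I_(l * N) :=
  Ordinal (pool_idx_proof k j).

(* channel-wise maximum over the window; l >= 1 is assumed in the theorem,
   the seed of the fold is the first window element (irrelevant when l >= 1
   since max is idempotent). *)
Definition maxpool (c l N : nat) (W : 'M[R]_(c, l * N)) : 'M[R]_(c, N) :=
  \matrix_(ch < c, k < N)
     let win := [seq W ch (pool_idx k j) | j <- enum 'I_l] in
     \big[Num.max/head 0 win]_(x <- win) x.

(* Column-wise stacked vector: entry m*c + ch is (w_m)_ch. *)
Definition stack (c M : nat) (W : 'M[R]_(c, M)) : 'cV[R]_(M * c) :=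
  (mxvec W^T)^T.

Definition blkdiag (c M : nat) (S : 'M[R]_c) : 'M[R]_(M * c) :=
  \matrix_(i, j) \sum_(m < M) \sum_(a < c) \sum_(b < c)
     (((i : nat) == m * c + a)%N && ((j : nat) == m * c + b)%N)%:R * S a b.

Definition diag_posdef (c : nat) (S : 'M[R]_c) : Prop :=
  is_diag_mx S /\ forall v : 'cV[R]_c, v != 0 -> 0 < (v^T *m S *m v) 0 0.

End Defs.

From mathcomp Require Import all_boot all_order all_algebra.
Set Implicit Arguments. Unset Strict Implicit. Unset Printing Implicit Defensive.
Import Order.TTheory GRing.Theory Num.Theory.
Local Open Scope ring_scope.

(* The channels decouple because Sigma is diagonal with positive entries, so it
   suffices to show, channel by channel, that the squared distance of two
   window maxima is at most the sum of the squared distances of the window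
   entries.  If the maxima are attained at i and j, then
   f j - g j <= f i - g j <= f i - g i, so (f i - g j)^2 is bounded by one of
   the two extreme squares, each of which is a term of the sum.  The stacked
   inequality is the sum of the windowed ones, since a block-diagonal
   quadratic form splits along its blocks and the input columns split along
   the pooling windows. *)

Lemma enum_rank_index (T : finType) (x : T) :
  (enum_rank x : nat) = index x (enum T).
Proof.
by rewrite -[in RHS](nth_enum_rank x x) index_uniq ?enum_uniq // -cardE ltn_ord.
Qed.

Lemma index_allpairs (T1 T2 : eqType) (s1 : seq T1) (s2 : seq T2) x1 x2 :
  x1 \in s1 -> x2 \in s2 ->
  index (x1, x2) [seq (y1, y2) | y1 <- s1, y2 <- s2]
  = (index x1 s1 * size s2 + index x2 s2)%N.
Proof.
move=> + x2s2; elim: s1 => [|y s1 IH] //= x1s1.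
rewrite index_cat /=; case: (eqVneq y x1) => [->|y_neq_x1].
  have -> : (x1, x2) \in [seq (x1, y2) | y2 <- s2] by apply: map_f.
  by rewrite index_map //; move=> a b [].
have -> : (x1, x2) \in [seq (y, y2) | y2 <- s2] = false.
  by apply/negbTE/mapP => -[z _ [y_eq _]]; rewrite y_eq eqxx in y_neq_x1.
move: x1s1; rewrite in_cons eq_sym (negbTE y_neq_x1) => /IH->.
by rewrite size_map mulSn addnA.
Qed.

Lemma mxvec_index_val m n (i : 'I_m) (j : 'I_n) :
  (mxvec_index i j : nat) = (i * n + j)%N.
Proof.
rewrite /mxvec_index /= enum_rank_index.
have -> : enum {: 'I_m * 'I_n} = prod_enum 'I_m 'I_n by rewrite enumT unlock.
by rewrite /prod_enum index_allpairs ?mem_enum // !index_enum_ord size_enum_ord.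
Qed.

Lemma eqn_divmod (d q1 r1 q2 r2 : nat) : (r1 < d)%N -> (r2 < d)%N ->
  (q1 * d + r1 == q2 * d + r2)%N = (q1 == q2) && (r1 == r2).
Proof.
move=> r1_lt r2_lt; apply/eqP/andP => [eq_qr|[/eqP-> /eqP->]] //.
have d_gt0 : (0 < d)%N by apply: leq_ltn_trans r1_lt.
have := congr1 (divn^~ d) eq_qr; have := congr1 (modn^~ d) eq_qr.
rewrite /= !modnMDl !modn_small // !divnMDl // !divn_small // !addn0 => -> ->.
by split.
Qed.

Lemma sum_mxvec_index (R : nmodType) m n (F : 'I_(m * n) -> R) :
  \sum_i F i = \sum_(i < m) \sum_(j < n) F (mxvec_index i j).
Proof.
rewrite pair_bigA (reindex _ (curry_mxvec_bij _ _)) /=.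
by apply: eq_bigr => -[i j].
Qed.

Lemma pool_idxE l N (k : 'I_N) (j : 'I_l) :
  pool_idx k j = cast_ord (mulnC N l) (mxvec_index k j).
Proof. by apply: val_inj; rewrite /= [RHS]mxvec_index_val mulnC. Qed.

Lemma sum_pool_idx (R : nmodType) l N (F : 'I_(l * N) -> R) :
  \sum_i F i = \sum_(k < N) \sum_(j < l) F (pool_idx k j).
Proof.
rewrite (reindex (cast_ord (mulnC N l))) /=; last first.
  by exists (cast_ord (mulnC l N)) => i _; apply: val_inj.
rewrite sum_mxvec_index; apply: eq_bigr => k _; apply: eq_bigr => j _.
by rewrite pool_idxE.
Qed.

Lemma bigmax_mem {disp} {T : orderType disp} (x : T) (s : seq T) :
  \big[Order.max/x]_(y <- s) y \in x :: s.
Proof.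
rewrite big_seq.
apply: (big_ind (fun y => y \in x :: s)) => [|a b a_in b_in|y y_in].
- exact: mem_head.
- by rewrite maxEle; case: ifP.
- by rewrite in_cons y_in orbT.
Qed.

Lemma sum_eq_natr_mul (R : pzSemiRingType) (I : finType) (i0 : I) (F : I -> R) :
  \sum_i (i0 == i)%:R * F i = F i0.
Proof.
rewrite (bigD1 i0) //= eqxx mul1r big1 ?addr0 // => i i_neq.
by rewrite eq_sym (negbTE i_neq) mul0r.
Qed.

Lemma quad_formE (R : pzSemiRingType) n (A : 'M[R]_n) (x : 'cV_n) :
  (x^T *m A *m x) 0 0 = \sum_j \sum_i x i 0 * A i j * x j 0.
Proof.
rewrite mxE; apply: eq_bigr => j _; rewrite mxE mulr_suml.
by apply: eq_bigr => i _; rewrite !mxE.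
Qed.

Lemma diag_quad_formE (R : comPzSemiRingType) n (d : 'rV[R]_n) (v : 'cV_n) :
  (v^T *m diag_mx d *m v) 0 0 = \sum_i d 0 i * v i 0 ^+ 2.
Proof.
rewrite mul_mx_diag mxE; apply: eq_bigr => i _.
by rewrite !mxE mulrAC mulrC expr2.
Qed.

Lemma sqr_sub_argmax_le (R : realDomainType) (I : finType) (f g : I -> R) i j :
  (forall k, f k <= f i) -> (forall k, g k <= g j) ->
  (f i - g j) ^+ 2 <= \sum_k (f k - g k) ^+ 2.
Proof.
move=> f_le g_le.
have term_le k : (f k - g k) ^+ 2 <= \sum_k (f k - g k) ^+ 2.
  by rewrite (bigD1 k) //= lerDl sumr_ge0 // => ? _; rewrite sqr_ge0.
have [x_ge0 | x_lt0] := leP 0 (f i - g j).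
  apply: le_trans (term_le i); rewrite ler_sqr ?lerD2l ?lerN2 //.
  by rewrite nnegrE (le_trans x_ge0) // lerD2l lerN2.
apply: le_trans (term_le j); rewrite -sqrrN -[(f j - g j) ^+ 2]sqrrN ler_sqr.
- by rewrite lerN2 lerD2r.
- by rewrite nnegrE oppr_ge0 ltW.
- by rewrite nnegrE oppr_ge0 (le_trans _ (ltW x_lt0)) // lerD2r.
Qed.

Lemma colB (V : zmodType) m n (A B : 'M[V]_(m, n)) j :
  col j (A - B) = col j A - col j B.
Proof. by apply/matrixP => i k; rewrite !mxE. Qed.

Lemma col_subE (V : zmodType) m n (A B : 'M[V]_(m, n)) i j :
  (col j A - col j B) i 0 = A i j - B i j.
Proof. by rewrite !mxE. Qed.

Section RealField.
Variable R : realFieldType.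

Lemma diag_posdef_diag_mx c (S : 'M[R]_c) :
  diag_posdef S -> exists2 d : 'rV_c, S = diag_mx d & forall a, 0 < d 0 a.
Proof.
move=> [/diag_mxP[d ->] S_pos]; exists d => // a.
have delta_neq0 : (delta_mx a 0 : 'cV[R]_c) != 0.
  apply/negP => /eqP/matrixP/(_ a 0).
  by rewrite !mxE !eqxx /= => /eqP; rewrite oner_eq0.
have := S_pos _ delta_neq0; rewrite diag_quad_formE (bigD1 a) //= big1 ?addr0.
  by rewrite !mxE !eqxx /= expr1n mulr1.
by move=> b b_neq_a; rewrite !mxE (negbTE b_neq_a) /= expr0n mulr0.
Qed.

Section Maxpool.
Variables (c l N : nat) (W : 'M[R]_(c, l * N)) (ch : 'I_c) (k : 'I_N).

Lemma maxpool_ge (j : 'I_l) : W ch (pool_idx k j) <= maxpool W ch k.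
Proof.
rewrite mxE; apply: (@le_bigmax_seq _ _ _ _ _ _ xpredT id) => //.
by apply: map_f; rewrite mem_enum.
Qed.

Lemma maxpool_attained :
  (0 < l)%N -> exists j, maxpool W ch k = W ch (pool_idx k j).
Proof.
move=> l_gt0; rewrite mxE; cbv zeta; set win := map _ _.
suff /mapP[j _ ->] : \big[Num.max/head 0 win]_(y <- win) y \in win by exists j.
have head_in : head 0 win \in win.
  by rewrite -nth0 mem_nth // size_map size_enum_ord.
by have := bigmax_mem (head 0 win) win; rewrite in_cons => /predU1P[->|].
Qed.

End Maxpool.

Lemma blkdiagE c M (S : 'M[R]_c) m1 a1 m2 b2 :
  blkdiag M S (mxvec_index m1 a1) (mxvec_index m2 b2) = (m1 == m2)%:R * S a1 b2.
Proof.
have natr_and4 (p q r s : bool) (x : R) :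
    ((p && q) && (r && s))%:R * x = p%:R * (q%:R * (s%:R * (r%:R * x))).
  by case: p; case: q; case: r; case: s; rewrite /= ?mul0r ?mul1r.
rewrite mxE !mxvec_index_val.
under eq_bigr => m _ do under eq_bigr => a _ do under eq_bigr => b _ do
  rewrite !eqn_divmod // natr_and4.
under eq_bigr => m _ do under eq_bigr => a _ do rewrite -!mulr_sumr.
under eq_bigr => m _ do rewrite -mulr_sumr.
by rewrite !sum_eq_natr_mul eq_sym.
Qed.

Lemma blkdiag_quad_formE c M (S : 'M[R]_c) (W : 'M[R]_(c, M)) :
  ((stack W)^T *m blkdiag M S *m stack W) 0 0
  = \sum_(m < M) ((col m W)^T *m S *m col m W) 0 0.
Proof.
rewrite quad_formE sum_mxvec_index; apply: eq_bigr => m2 _.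
rewrite quad_formE; apply: eq_bigr => b2 _.
rewrite sum_mxvec_index (bigD1 m2) //= [X in _ + X]big1 ?addr0 => [|m m_neq].
  by apply: eq_bigr => a _; rewrite blkdiagE eqxx mul1r /stack !mxE !mxvecE !mxE.
by apply: big1 => a _; rewrite blkdiagE (negbTE m_neq) mul0r mulr0 mul0r.
Qed.

Lemma stackB c M (A B : 'M[R]_(c, M)) : stack (A - B) = stack A - stack B.
Proof. by rewrite /stack !linearB. Qed.


Lemma maxpool_sqr_sub_le c l N (Wa Wb : 'M[R]_(c, l * N)) ch k : (0 < l)%N ->
  (maxpool Wa ch k - maxpool Wb ch k) ^+ 2
  <= \sum_j (Wa ch (pool_idx k j) - Wb ch (pool_idx k j)) ^+ 2.
Proof.
move=> l_gt0.
have [i max_a] := maxpool_attained Wa ch k l_gt0.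
have [j max_b] := maxpool_attained Wb ch k l_gt0.
rewrite [in X in (X - _) ^+ 2]max_a [in X in (_ - X) ^+ 2]max_b.
apply: (sqr_sub_argmax_le (f := fun j => Wa ch (pool_idx k j))) => j'.
  by rewrite -max_a maxpool_ge.
by rewrite -max_b maxpool_ge.
Qed.

Lemma maxpool_window_ineq c l N (Sigma : 'M[R]_c) (Wa Wb : 'M[R]_(c, l * N)) k :
  (0 < l)%N -> diag_posdef Sigma ->
  let d := col k (maxpool Wa) - col k (maxpool Wb) in
  0 <= - (d^T *m Sigma *m d) 0 0
       + \sum_(j < l)
           (let e := col (pool_idx k j) Wa - col (pool_idx k j) Wb in
            (e^T *m Sigma *m e) 0 0).
Proof.
move=> l_gt0 /diag_posdef_diag_mx[s -> s_gt0]; cbv zeta.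
under eq_bigr do rewrite diag_quad_formE.
rewrite diag_quad_formE exchange_big /= addrC subr_ge0; apply: ler_sum => a _.
rewrite -mulr_sumr; apply: ler_wpM2l; first exact: ltW.
rewrite col_subE; under eq_bigr do rewrite col_subE.
exact: maxpool_sqr_sub_le.
Qed.

End RealField.

Theorem lemma9 (R : realFieldType) (c l N : nat)
  (hc : (0 < c)%N) (hl : (0 < l)%N) (hN : (0 < N)%N)
  (Sigma : 'M[R]_c) (hS : diag_posdef Sigma) :
  (forall (Wa Wb : 'M[R]_(c, l * N)) (k : 'I_N),
     let d := col k (maxpool Wa) - col k (maxpool Wb) in
     0 <= - (d^T *m Sigma *m d) 0 0
          + \sum_(j < l)
              (let e := col (pool_idx k j) Wa - col (pool_idx k j) Wb in
               (e^T *m Sigma *m e) 0 0))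
  /\
  (forall Wa Wb : 'M[R]_(c, l * N),
     let z := col_mx (stack (maxpool Wa) - stack (maxpool Wb))
                     (stack Wa - stack Wb) in
     0 <= (z^T *m block_mx (- blkdiag N Sigma) 0 0 (blkdiag (l * N) Sigma) *m z) 0 0).
Proof.
split=> [Wa Wb k|Wa Wb]; first exact: maxpool_window_ineq.
rewrite /= tr_col_mx mul_row_block mul_row_col !mulmx0 !addr0 !add0r -!stackB.
rewrite mxE mulmxN mulNmx mxE !blkdiag_quad_formE sum_pool_idx -sumrN -big_split.
apply: sumr_ge0 => k _; rewrite !colB; under eq_bigr do rewrite colB.
exact: maxpool_window_ineq.
Qed.
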